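(* Every POP-graph $(G,\prec)$ has an elementary decomposition: there are elementary POP-graphs $(G_1,\prec_1),\dots,(G_n,\prec_n)$ such that $(G,\prec)=(G_n,\prec_n)\circ\cdots\circ(G_1,\prec_1)$.
   Context: A progressive graph is a finite directed acyclic graph (parallel edges allowed) in which every source and every sink has degree one; degree-one vertices are boundary vertices, the others internal. It is elementary if each connected component has at most one internal vertex. An input edge is an edge whose initial vertex is a boundary vertex; an output edge one whose terminal vertex is a boundary vertex. For edges write $e\to e'$ if $e\neq e'$ and there is a directed path whose first edge is $e$ and last edge is $e'$. A planar order on $G$ is a linear order $\prec$ on $E(G)$ such that (P1) $e_1\to e_2$ implies $e_1\prec e_2$; (P2) if $e_1\prec e_2\prec e_3$ and $e_1\to e_3$ then $e_1\to e_2$ or $e_2\to e_3$. A POP-graph is a progressive graph with a planar order; it is elementary if the graph is. Equality of POP-graphs means isomorphism (bijections of vertices and edges preserving incidence, direction and order). Composition: let $(G_1,\prec_1)$, $(G_2,\prec_2)$ be POP-graphs, $G_1$ with output edges $o_1\prec_1\cdots\prec_1 o_n$ and $G_2$ with input edges $i_1\prec_2\cdots\prec_2 i_n$. $G_2\circ G_1$ is obtained from $G_1\sqcup G_2$ by deleting the sinks of $G_1$, the sources of $G_2$ and the edges $o_k,i_k$, and adding for each $k$ a new edge $\overline{e_k}$ from the initial vertex of $o_k$ to the terminal vertex of $i_k$. With $Q_1=\{e\in E(G_1): e\prec_1 o_1\}$, $Q_k=\{e: o_{k-1}\prec_1 e\prec_1 o_k\}$, $P_k=\{e\in E(G_2):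 i_k\prec_2 e\prec_2 i_{k+1}\}$ ($k<n$), $P_n=\{e: i_n\prec_2 e\}$, the order $\prec_2\circ\prec_1$ lists $Q_1,\{\overline{e_1}\},P_1,\dots,Q_n,\{\overline{e_n}\},P_n$ consecutively, each $Q_k$ ordered by $\prec_1$, each $P_k$ by $\prec_2$; $(G_2,\prec_2)\circ(G_1,\prec_1):=(G_2\circ G_1,\prec_2\circ\prec_1)$. *)

From HB Require Import structures.
From mathcomp Require Import all_boot.

Set Implicit Arguments.
Unset Strict Implicit.
Unset Printing Implicit Defensive.

(* The vertex set
   is a finite type; the edges are the positions of the list [edges G]
   (parallel edges = repeated pairs at different positions); the edge at
   position k goes from [(edges G)`_k.1] to [(edges G)`_k.2]; the linear order
   on edges is the order of positions in the list. *)
Record pgraph := PGraph { vtx : finType; edges : seq (vtx * vtx) }.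

Section Basic.
Variable G : pgraph.
Local Notation V := (vtx G).
Local Notation E := (edges G).

Definition indeg (v : V) := count (fun e : V * V => e.2 == v) E.
Definition outdeg (v : V) := count (fun e : V * V => e.1 == v) E.
Definition deg (v : V) := indeg v + outdeg v.
Definition is_source (v : V) := indeg v == 0.
Definition is_sink (v : V) := outdeg v == 0.
Definition boundary (v : V) := deg v == 1.
Definition internal (v : V) := ~~ boundary v.

Definition adj : rel V := fun u w => (u, w) \in E.
Definition uadj : rel V := fun u w => adj u w || adj w u.

Definition acyclic : Prop := forall e, e \in E -> ~~ connect adj e.2 e.1.

Definition progressive : Prop :=
  acyclic /\ forall v : V, (is_source v -> deg v = 1) /\ (is_sink v -> deg v = 1).

Definition elementary : Prop :=
  forall u v : V, internal u -> internal v -> connect uadj u v -> u = v.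

Definition is_input (e : V * V) := boundary e.1.
Definition is_output (e : V * V) := boundary e.2.

Definition Eidx := 'I_(size E).
Definition edge (i : Eidx) : V * V := tnth (in_tuple E) i.

Definition arrow (i j : Eidx) : bool :=
  (i != j) && connect adj (edge i).2 (edge j).1.

Definition planar : Prop :=
  (forall i j : Eidx, arrow i j -> i < j) /\
  (forall i j k : Eidx, i < j -> j < k -> arrow i k -> arrow i j || arrow j k).

Definition is_pop : Prop := progressive /\ planar.
Definition elementary_pop : Prop := is_pop /\ elementary.

End Basic.

(* isomorphism of POP-graphs: a vertex bijection carrying the edge at each
   position to the edge at the same position (an order-preserving bijection of
   finite linearly ordered edge sets is forced to preserve positions). *)
Definition pop_iso (G H : pgraph) : Prop :=
  exists f : vtx G -> vtx H, bijective f /\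
    map (fun e => (f e.1, f e.2)) (edges G) = edges H.

Fixpoint split_r (T : Type) (p : pred T) (s : seq T) : seq T * seq (T * seq T) :=
  match s with
  | [::] => ([::], [::])
  | x :: s' => let: (h, cs) := split_r p s' in
               if p x then ([::], (x, h) :: cs) else (x :: h, cs)
  end.
(* s = h ++ x1 :: P1 ++ ... ++ xn :: Pn  ~~>  [:: (x1,P1); ...; (xn,Pn)] *)
Definition chunks_after (T : Type) (p : pred T) (s : seq T) := (split_r p s).2.
(* s = Q1 ++ x1 :: ... ++ Qn ++ xn :: t  ~~>  [:: (Q1,x1); ...; (Qn,xn)] *)
Definition chunks_before (T : Type) (p : pred T) (s : seq T) :=
  map (fun c : T * seq T => (rev c.2, c.1)) (rev (split_r p (rev s)).2).

Definition composable (G1 G2 : pgraph) : Prop :=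
  count (is_output (G:=G1)) (edges G1) = count (is_input (G:=G2)) (edges G2).

Section Comp.
Variables G2 G1 : pgraph.
Local Notation V1 := (vtx G1).
Local Notation V2 := (vtx G2).
Definition keep (x : (V1 + V2)%type) : bool :=
  match x with inl v => ~~ is_sink v | inr v => ~~ is_source v end.
Definition cvtx := {x : (V1 + V2)%type | keep x}.

Definition raw_edges : seq ((V1 + V2) * (V1 + V2))%type :=
  flatten [seq map (fun e : V1 * V1 => (inl e.1, inl e.2)) c.1.1
            ++ [:: (inl c.1.2.1, inr c.2.1.2)]
            ++ map (fun e : V2 * V2 => (inr e.1, inr e.2)) c.2.2
          | c <- zip (chunks_before (is_output (G:=G1)) (edges G1))
                     (chunks_after (is_input (G:=G2)) (edges G2))].

Definition restrict_edge (e : ((V1 + V2) * (V1 + V2))%type) : option (cvtx * cvtx) :=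
  match insub e.1, insub e.2 with
  | Some a, Some b => Some (a, b)
  | _, _ => None
  end.

(* G2 o G1 *)
Definition pop_comp : pgraph := @PGraph (cvtx : finType) (pmap restrict_edge raw_edges).
End Comp.

(* acc = G_k o ... o G_1; the remaining factors G_{k+1},...,G_n *)
Fixpoint decomp_chain (acc : pgraph) (gs : seq pgraph) : Prop :=
  match gs with
  | [::] => True
  | g :: gs' => elementary_pop g /\ composable acc g /\ decomp_chain (pop_comp g acc) gs'
  end.

(* Induction on the number of edges.  If G has an internal vertex, let v be the
   head of the last edge a (in the planar order) whose head is internal, so that
   every later edge ends in a sink.  Planarity puts every edge leaving v after a,
   and makes every edge lying between an edge into v and an edge out of v touch v
   or end at an internal vertex.  This is exactly what is needed to write
   G = E o G', where E consists of v with all its edges together with a wire for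
   every other edge ending in a sink, and G' is G with the edges leaving v removed
   and the edges entering v cut at fresh sinks.  E is elementary, and G' is a
   POP-graph with fewer edges since v has an outgoing edge. *)

From mathcomp Require Import all_boot zify.

Set Implicit Arguments.
Unset Strict Implicit.
Unset Printing Implicit Defensive.

Lemma connect_hom (T U : finType) (e : rel T) (e' : rel U) (h : T -> U) :
  {homo h : x y / e x y >-> e' x y} -> {homo h : x y / connect e x y >-> connect e' x y}.
Proof.
move=> he x y /connectP [p]; elim: p x => [|z p IH] x /=; first by move=> _ ->.
by case/andP=> /he exz /IH pz /pz; apply: connect_trans (connect1 exz).
Qed.

Lemma connect_lift (T U : finType) (e : rel T) (e' : rel U) (h : T -> U) :
  injective h -> (forall x z, e' (h x) z -> exists2 y, z = h y & e x y) ->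
  forall x y, connect e' (h x) (h y) -> connect e x y.
Proof.
move=> hi he x y /connectP [p]; elim: p x => [|z p IH] x /=; first by move=> _ /hi ->.
case/andP=> /he [w -> exw] pw /(IH _ pw); exact: connect_trans (connect1 exw).
Qed.

Lemma connect_noout (T : finType) (e : rel T) x y :
  (forall z, ~~ e x z) -> connect e x y -> y = x.
Proof.
move=> h /connectP [[|z p] /=]; first by move=> _ ->.
by rewrite (negbTE (h z)).
Qed.

Lemma connect_noin (T : finType) (e : rel T) x y :
  (forall z, ~~ e z y) -> connect e x y -> x = y.
Proof.
move=> h /connectP [p]; case/lastP: p => [|p z] /=; first by move=> _ ->.
by rewrite rcons_path last_rcons => /andP [_ + ez]; rewrite -ez (negbTE (h _)).
Qed.

Lemma count_pmap (T U : Type) (P : pred U) (f : T -> option U) s :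
  count P (pmap f s) = count (fun x => oapp P false (f x)) s.
Proof. by elim: s => //= x s IH; case: (f x) => /= [y|]; rewrite IH. Qed.

Lemma pmap_map (T U W : Type) (g : U -> option W) (h : T -> U) s :
  pmap g (map h s) = pmap (g \o h) s.
Proof. by elim: s => //= x s ->. Qed.

Lemma pmap_omap (T U W : Type) (r : T -> option U) (F : U -> W) s :
  pmap (fun x => omap F (r x)) s = map F (pmap r s).
Proof. by elim: s => //= x s ->; case: (r x). Qed.

Lemma count_predF (T : Type) (p : pred T) s : (forall x, ~~ p x) -> count p s = 0.
Proof. by move=> np; rewrite (eq_count (a2 := pred0)) ?count_pred0 // => x; apply/negbTE. Qed.

Lemma count_iota_eq n i (c : bool) :
  i < n -> count (fun j => (j == i) && c) (iota 0 n) = c.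
Proof.
move=> lt_in; case: c.
- under eq_count => j do rewrite andbT.
  by have := count_uniq_mem i (iota_uniq 0 n); rewrite mem_iota lt_in.
- under eq_count => j do rewrite andbF.
  exact: count_pred0.
Qed.

Lemma pairwise_pmap (T U : Type) (f : T -> option U) (r : rel U) s :
  pairwise (fun x y => oapp (fun a => oapp (r a) true (f y)) true (f x)) s ->
  pairwise r (pmap f s).
Proof.
elim: s => //= x s IH /andP [hx /IH hs]; case: (f x) hx => [y|] hx //=.
by rewrite hs all_pmap andbT.
Qed.

Lemma pairwise_iota (r : rel nat) n :
  (forall i j, i < j -> j < n -> r i j) -> pairwise r (iota 0 n).
Proof.
move=> h; apply/(pairwiseP 0) => i j; rewrite !inE size_iota => _ lt_jn lt_ij.
by rewrite !nth_iota //; [apply: h | apply: ltn_trans lt_ij lt_jn].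
Qed.

Fixpoint triplewise (T : Type) (r : T -> T -> T -> bool) (s : seq T) : bool :=
  if s is x :: s' then pairwise (r x) s' && triplewise r s' else true.

Lemma triplewise_map (T U : Type) (h : T -> U) r s :
  triplewise r (map h s) = triplewise (fun x y z => r (h x) (h y) (h z)) s.
Proof. by elim: s => //= x s ->; rewrite pairwise_map. Qed.

Lemma eq_triplewise (T : Type) (r r' : T -> T -> T -> bool) :
  (forall x y z, r x y z = r' x y z) -> triplewise r =1 triplewise r'.
Proof. by move=> h; elim=> //= x s ->; congr andb; apply: eq_pairwise. Qed.

Lemma triplewiseP (T : Type) (r : T -> T -> T -> bool) (x0 : T) s :
  reflect (forall i j k, i < j -> j < k -> k < size s ->
             r (nth x0 s i) (nth x0 s j) (nth x0 s k)) (triplewise r s).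
Proof.
elim: s => [|x s IH] /=; first by constructor.
apply: (iffP andP) => [[/(pairwiseP x0) hx /IH hs] | h].
- move=> [|i] [|j] [|k] //= lt_ij lt_jk lt_ks; last exact: hs.
  by apply: hx; rewrite // inE; apply: ltn_trans lt_jk lt_ks.
- split; first by apply/(pairwiseP x0) => j k lt_js lt_ks lt_jk; apply: (h 0 j.+1 k.+1).
  by apply/IH => i j k; apply: (h i.+1 j.+1 k.+1).
Qed.

Lemma triplewise_pmap (T U : Type) (f : T -> option U) (r : U -> U -> U -> bool) s :
  triplewise (fun x y z => oapp (fun a => oapp (fun b => oapp (r a b) true (f z))
                                                true (f y)) true (f x)) s ->
  triplewise r (pmap f s).
Proof.
elim: s => //= x s IH /andP [hx /IH hs]; case: (f x) hx => [y|] hx //=.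
by rewrite hs andbT; apply: pairwise_pmap.
Qed.

Lemma triplewise_iota (r : nat -> nat -> nat -> bool) n :
  (forall i j k, i < j -> j < k -> k < n -> r i j k) -> triplewise r (iota 0 n).
Proof.
move=> h; apply/(triplewiseP _ 0) => i j k lt_ij lt_jk; rewrite size_iota => lt_kn.
have lt_jn := ltn_trans lt_jk lt_kn.
by rewrite !nth_iota //; [apply: h | apply: ltn_trans lt_ij lt_jn].
Qed.

(** * Embeddings of edge-ordered graphs *)

Definition emap (T U : Type) (f : T -> U) (e : T * T) := (f e.1, f e.2).

Definition pgraph_emb (X Y : pgraph) (f : vtx X -> vtx Y) :=
  injective f /\ map (emap f) (edges X) = edges Y.

Lemma adj_outdeg (X : pgraph) (x z : vtx X) : adj x z -> 0 < outdeg x.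
Proof. by move=> xz; rewrite -has_count; apply/hasP; exists (x, z). Qed.

Lemma adj_indeg (X : pgraph) (x z : vtx X) : adj z x -> 0 < indeg x.
Proof. by move=> zx; rewrite -has_count; apply/hasP; exists (z, x). Qed.

Lemma no_adj_outdeg0 (X : pgraph) (x : vtx X) : outdeg x = 0 -> forall z, ~~ adj x z.
Proof. by move=> out0 z; apply/negP => /adj_outdeg; rewrite out0. Qed.

Lemma no_adj_indeg0 (X : pgraph) (x : vtx X) : indeg x = 0 -> forall z, ~~ adj z x.
Proof. by move=> in0 z; apply/negP => /adj_indeg; rewrite in0. Qed.

Section Embedding.
Variables (X Y : pgraph) (f : vtx X -> vtx Y).
Hypothesis femb : pgraph_emb f.

Let f_inj : injective f. Proof. by case: femb. Qed.
Let f_edges : map (emap f) (edges X) = edges Y. Proof. by case: femb. Qed.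

Lemma emap_inj : injective (emap f).
Proof. by move=> [a b] [c d] [/f_inj -> /f_inj ->]. Qed.

Lemma indeg_emb x : indeg (f x) = indeg x.
Proof. by rewrite /indeg -f_edges count_map; apply: eq_count => e /=; rewrite (inj_eq f_inj). Qed.

Lemma outdeg_emb x : outdeg (f x) = outdeg x.
Proof. by rewrite /outdeg -f_edges count_map; apply: eq_count => e /=; rewrite (inj_eq f_inj). Qed.

Lemma boundary_emb x : boundary (f x) = boundary x.
Proof. by rewrite /boundary /deg indeg_emb outdeg_emb. Qed.

Lemma adj_emb x y : adj (f x) (f y) = adj x y.
Proof. by rewrite /adj -f_edges -[(f x, f y)]/(emap f (x, y)) (mem_map emap_inj). Qed.

Lemma adj_emb_lift x z : adj (f x) z -> exists2 y, z = f y & adj x y.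
Proof. by rewrite /adj -f_edges => /mapP [[a b] ab] /= [/f_inj -> ->]; exists b. Qed.

Lemma connect_emb x y : connect (@adj Y) (f x) (f y) = connect (@adj X) x y.
Proof.
apply/idP/idP; last by apply: connect_hom => a b; rewrite adj_emb.
by apply: connect_lift => //; apply: adj_emb_lift.
Qed.

Lemma acyclic_emb : acyclic Y <-> acyclic X.
Proof.
split=> acyc e.
- by move/(map_f (emap f)); rewrite f_edges => /acyc; rewrite connect_emb.
- by rewrite -f_edges => /mapP [e' /acyc + ->]; rewrite connect_emb.
Qed.

Lemma count_output_emb : count (@is_output Y) (edges Y) = count (@is_output X) (edges X).
Proof. by rewrite -f_edges count_map; apply: eq_count => e; rewrite /= /is_output boundary_emb. Qed.

Lemma count_input_emb : count (@is_input Y) (edges Y) = count (@is_input X) (edges X).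
Proof. by rewrite -f_edges count_map; apply: eq_count => e; rewrite /= /is_input boundary_emb. Qed.

Lemma elementary_emb :
  (forall x y, internal (f x) -> internal (f y) -> x = y) -> elementary X.
Proof. by move=> h x y ix iy _; apply: h; rewrite /internal boundary_emb. Qed.

End Embedding.

Lemma pgraph_emb_id (X : pgraph) : pgraph_emb (@id (vtx X)).
Proof. by split=> //; elim: (edges X) => //= -[a b] s ->. Qed.

Lemma pgraph_emb_comp (X Y Z : pgraph) (f : vtx X -> vtx Y) (g : vtx Y -> vtx Z) :
  pgraph_emb f -> pgraph_emb g -> pgraph_emb (g \o f).
Proof. by case=> fi fe [gi ge]; split; [apply: inj_comp | rewrite -ge -fe -map_comp]. Qed.

Lemma pop_iso_emb (X Y : pgraph) (f : vtx X -> vtx Y) :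
  pgraph_emb f -> (forall y, exists x, y = f x) -> pop_iso X Y.
Proof.
case=> fi fe fsurj; exists f; split => //.
have cod y : y \in codom f by have [x ->] := fsurj y; apply: codom_f.
by exists (fun y => iinv (cod y)) => [x|y]; [apply: fi | ]; rewrite f_iinv.
Qed.

Lemma emb_of_pop_iso (X Y : pgraph) : pop_iso X Y -> exists f : vtx X -> vtx Y, pgraph_emb f.
Proof. by case=> f [/bij_inj fi fe]; exists f. Qed.

(** * Planarity read off the edge list *)

Definition reaches (G : pgraph) (e1 e2 : vtx G * vtx G) := connect (@adj G) e1.2 e2.1.

Definition planar_seq (G : pgraph) :=
  pairwise (fun x y => ~~ reaches y x) (edges G) &&
  triplewise (fun x y z => reaches x z ==> reaches x y || reaches y z) (edges G).

Lemma edgeE (G : pgraph) (i : Eidx G) d : edge i = nth d (edges G) i.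
Proof. by rewrite /edge (tnth_nth d). Qed.

Lemma arrowE (G : pgraph) (i j : Eidx G) d :
  arrow i j = (i != j :> nat) && reaches (nth d (edges G) i) (nth d (edges G) j).
Proof. by rewrite /arrow /reaches !(edgeE _ d). Qed.

Lemma planarP (G : pgraph) : planar G <-> planar_seq G.
Proof.
split=> [[P1 P2] | /andP [pw tw]].
- case Ee: (edges G) => [|x0 s]; first by rewrite /planar_seq Ee.
  apply/andP; split.
  + apply/(pairwiseP x0) => i j; rewrite !inE => lt_iN lt_jN lt_ij; apply/negP => R.
    have := P1 (Ordinal lt_jN) (Ordinal lt_iN); rewrite (arrowE _ _ x0) /= R andbT.
    by rewrite neq_ltn lt_ij orbT => /(_ isT); rewrite ltnNge ltnW.
  + apply/(triplewiseP _ x0) => i j k lt_ij lt_jk lt_kN; apply/implyP => R.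
    have lt_jN := ltn_trans lt_jk lt_kN; have lt_iN := ltn_trans lt_ij lt_jN.
    have := P2 (Ordinal lt_iN) (Ordinal lt_jN) (Ordinal lt_kN) lt_ij lt_jk.
    rewrite !(arrowE _ _ x0) /= R (ltn_eqF lt_ij) (ltn_eqF lt_jk) (ltn_eqF (ltn_trans lt_ij lt_jk)).
    exact.
- split=> [i j | i j k lt_ij lt_jk].
  + rewrite (arrowE _ _ (edge i)) => /andP [ne_ij R]; case: ltngtP ne_ij => // lt_ji _.
    move/(pairwiseP (edge i)): pw => /(_ j i (ltn_ord j) (ltn_ord i) lt_ji).
    by rewrite R.
  + rewrite !(arrowE _ _ (edge i)) (ltn_eqF lt_ij) (ltn_eqF lt_jk) => /andP [_ R].
    move/(triplewiseP _ (edge i)): tw => /(_ i j k lt_ij lt_jk (ltn_ord k)).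
    by rewrite R.
Qed.

Lemma reaches_emb (X Y : pgraph) (f : vtx X -> vtx Y) a b :
  pgraph_emb f -> reaches (emap f a) (emap f b) = reaches a b.
Proof. by move=> femb; rewrite /reaches /= (connect_emb femb). Qed.

Lemma planar_seq_emb (X Y : pgraph) (f : vtx X -> vtx Y) :
  pgraph_emb f -> planar_seq Y = planar_seq X.
Proof.
move=> femb; have [_ fe] := femb; rewrite /planar_seq -fe pairwise_map triplewise_map.
congr andb; [apply: eq_pairwise => a b | apply: eq_triplewise => a b c];
  by rewrite /= ?(reaches_emb _ _ femb).
Qed.

Lemma is_pop_emb (X Y : pgraph) (f : vtx X -> vtx Y) :
  pgraph_emb f -> acyclic Y -> planar_seq Y ->
  (forall x, (is_source (f x) -> deg (f x) = 1) /\ (is_sink (f x) -> deg (f x) = 1)) ->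
  is_pop X.
Proof.
move=> femb acyc pl deg1; split; last by apply/planarP; rewrite -(planar_seq_emb femb).
split=> [|x]; first exact/(acyclic_emb femb).
by have := deg1 x; rewrite /is_source /is_sink /deg indeg_emb ?outdeg_emb.
Qed.

(** * Edge lists of composites *)

Section Chunks.
Variables (T : Type) (p : pred T).

Lemma split_r_cat s t : all (predC p) s ->
  split_r p (s ++ t) = (s ++ (split_r p t).1, (split_r p t).2).
Proof.
elim: s => [|x s IH] /=; first by case: (split_r p t).
by case/andP=> /negbTE px /IH ->; rewrite px.
Qed.

Lemma split_r_flatten (cs : seq (T * seq T)) :
  all (fun c => p c.1 && all (predC p) c.2) cs ->
  split_r p (flatten [seq c.1 :: c.2 | c <- cs]) = ([::], cs).
Proof.
elim: cs => [|[x P] cs IH] //= /andP [/andP [px hP] /IH IHcs].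
by rewrite (split_r_cat _ hP) IHcs /= px cats0.
Qed.

Lemma chunks_after_flatten (cs : seq (T * seq T)) :
  all (fun c => p c.1 && all (predC p) c.2) cs ->
  chunks_after p (flatten [seq c.1 :: c.2 | c <- cs]) = cs.
Proof. by move=> h; rewrite /chunks_after split_r_flatten. Qed.

Lemma chunks_before_flatten (cs : seq (seq T * T)) :
  all (fun c => all (predC p) c.1 && p c.2) cs ->
  chunks_before p (flatten [seq rcons c.1 c.2 | c <- cs]) = cs.
Proof.
move=> h; rewrite /chunks_before.
have -> : rev (flatten [seq rcons c.1 c.2 | c <- cs]) =
    flatten [seq c.1 :: c.2 | c <- [seq (c.2, rev c.1) | c <- rev cs]].
  elim: cs {h} => //= c cs IH.
  by rewrite rev_cat IH rev_cons -!cats1 !map_cat flatten_cat /= cats0 rev_cat.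
rewrite split_r_flatten; last first.
  rewrite all_map all_rev; apply: sub_all h => c /= /andP [nP pc].
  by rewrite pc all_rev.
rewrite /= -map_rev revK -map_comp -[RHS]map_id; apply: eq_map => -[q o].
by rewrite /= revK.
Qed.

End Chunks.

Lemma eq_split_r (T : Type) (p q : pred T) : p =1 q -> split_r p =1 split_r q.
Proof. by move=> e; elim=> //= x s ->; rewrite e. Qed.

Lemma split_r_map (T U : Type) (p : pred U) (h : T -> U) s :
  split_r p (map h s) = (map h (split_r (p \o h) s).1,
                         map (fun c => (h c.1, map h c.2)) (split_r (p \o h) s).2).
Proof. by elim: s => //= x s ->; case: (split_r _ s) => a b /=; case: (p (h x)). Qed.

Lemma chunks_after_map (T U : Type) (p : pred U) (h : T -> U) s :
  chunks_after p (map h s) = map (fun c => (h c.1, map h c.2)) (chunks_after (p \o h) s).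
Proof. by rewrite /chunks_after split_r_map. Qed.

Lemma chunks_before_map (T U : Type) (p : pred U) (h : T -> U) s :
  chunks_before p (map h s) = map (fun c => (map h c.1, h c.2)) (chunks_before (p \o h) s).
Proof.
rewrite /chunks_before -map_rev split_r_map /= -map_rev -!map_comp.
by apply: eq_map => c /=; rewrite map_rev.
Qed.

Lemma eq_chunks_before (T : Type) (p q : pred T) s :
  p =1 q -> chunks_before p s = chunks_before q s.
Proof. by move=> e; rewrite /chunks_before (eq_split_r e). Qed.

Lemma eq_chunks_after (T : Type) (p q : pred T) s :
  p =1 q -> chunks_after p s = chunks_after q s.
Proof. by move=> e; rewrite /chunks_after (eq_split_r e). Qed.

(* The edges of a composite G2 o G1 in order: [Lower e] is a non-output edge of
   G1, [Upper e] a non-input edge of G2, and [Cross o i] the edge glued from an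
   output edge [o] of G1 and an input edge [i] of G2.  [blocks] regroups such a
   list into the chunks that [raw_edges] works with. *)
Inductive slot (A B : Type) := Lower of A | Cross of A & B | Upper of B.
Arguments Lower {A B}. Arguments Cross {A B}. Arguments Upper {A B}.

Section Slots.
Variables (A B : Type).
Implicit Types (k : slot A B) (ks : seq (slot A B)).

Definition lower_part k := match k with Lower e | Cross e _ => Some e | Upper _ => None end.
Definition upper_part k := match k with Lower _ => None | Cross _ e | Upper e => Some e end.
Definition is_lower k := if k is Lower _ then true else false.
Definition is_upper k := if k is Upper _ then true else false.

Fixpoint blocks ks : seq B * seq ((seq A * A) * (B * seq B)) :=
  match ks with
  | [::] => ([::], [::])
  | Upper e :: r => let: (us, bs) := blocks r in (e :: us, bs)
  | Cross o i :: r => let: (us, bs) := blocks r in ([::], (([::], o), (i, us)) :: bs)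
  | Lower e :: r => let: (_, bs) := blocks r in
      ([::], if bs is b :: bs' then ((e :: b.1.1, b.1.2), b.2) :: bs' else [::])
  end.

Fixpoint lower_closed ks : bool :=
  match ks with
  | [::] => true
  | Lower _ :: r => (if r is k :: _ then ~~ is_upper k else false) && lower_closed r
  | _ :: r => lower_closed r
  end.

Lemma lower_closed_lower e k r :
  lower_closed [:: Lower e, k & r] = ~~ is_upper k && lower_closed (k :: r).
Proof. by []. Qed.

Lemma blocks_lower e r : blocks (Lower e :: r) = let: (_, bs) := blocks r in
  ([::], if bs is b :: bs' then ((e :: b.1.1, b.1.2), b.2) :: bs' else [::]).
Proof. by []. Qed.

Lemma blocks_cross o i r :
  blocks (Cross o i :: r) = let: (us, bs) := blocks r in ([::], (([::], o), (i, us)) :: bs).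
Proof. by []. Qed.

Lemma blocks_head k r : ~~ is_upper k -> (blocks (k :: r)).1 = [::].
Proof. by case: k => [e|o i|e] //= _; case: (blocks r). Qed.

Lemma blocks_nil k r : lower_closed (k :: r) -> ~~ is_upper k -> ~~ nilp (blocks (k :: r)).2.
Proof.
elim: r k => [|k' r IH] [e|o i|e] //; last by rewrite blocks_cross; case: (blocks (k' :: r)).
rewrite lower_closed_lower blocks_lower => /andP [nu_k' cl] _.
move: (IH _ cl nu_k').
by case: (blocks (k' :: r)) => us [].
Qed.

Lemma lower_closed_cross l o i u :
  all (predC is_upper) l -> all (predC is_lower) u -> lower_closed (l ++ Cross o i :: u).
Proof.
move=> nu nl; elim: l nu => [|k l IH] /=.
- by move=> _; elim: u nl => [|[e|o' i'|e] u IHu] //= /andP [_ /IHu].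
- case/andP=> nu_k nu_l; rewrite IH //; case: k nu_k => //= e _; rewrite andbT.
  by case: l nu_l {IH} => //= k' l /andP [].
Qed.

Variables (C : Type) (m1 : A -> C) (mm : A -> B -> C) (m2 : B -> C).
Definition merge_slot k := match k with Lower e => m1 e | Cross o i => mm o i | Upper e => m2 e end.

Lemma blocksP ks : lower_closed ks ->
  [/\ pmap lower_part ks = flatten [seq rcons b.1.1 b.1.2 | b <- (blocks ks).2],
      pmap upper_part ks = (blocks ks).1 ++ flatten [seq b.2.1 :: b.2.2 | b <- (blocks ks).2] &
      map merge_slot ks = map m2 (blocks ks).1 ++
        flatten [seq map m1 b.1.1 ++ [:: mm b.1.2 b.2.1] ++ map m2 b.2.2 | b <- (blocks ks).2]].
Proof.
elim: ks => [|k r IH] //; case: k => [e|o i|e] /=; last 2 first.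
- by move/IH; case: (blocks r) => us bs /= [-> -> ->].
- by move/IH; case: (blocks r) => us bs /= [-> -> ->].
case: r IH => [|k r] // IH /andP [nu_k cl].
have [-> -> ->] := IH cl; move: (blocks_nil cl nu_k) (blocks_head r nu_k).
by case: (blocks (k :: r)) => us [|b bs] //= _ ->.
Qed.

Variables (P1 Q1 : pred A) (P2 Q2 : pred B).
Definition slot_pred k :=
  match k with Lower e => P1 e | Cross o i => Q1 o && Q2 i | Upper e => P2 e end.

Lemma blocks_all ks : all slot_pred ks ->
  all P2 (blocks ks).1 &&
  all (fun b => [&& all P1 b.1.1, Q1 b.1.2, Q2 b.2.1 & all P2 b.2.2]) (blocks ks).2.
Proof.
elim: ks => [|k r IH] //= /andP [hk /IH]; case: k hk => [e|o i|e] /=;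
  case: (blocks r) => us bs /=.
- move=> P1e /andP [_]; case: bs => //= b bs /andP [/and4P [-> -> -> ->] ->].
  by rewrite P1e.
- by case/andP=> -> -> /andP [-> ->].
- by move=> -> /andP [-> ->].
Qed.

End Slots.
Arguments lower_part {A B}. Arguments upper_part {A B}.
Arguments is_lower {A B}. Arguments is_upper {A B}.

Lemma slot_pred_parts (A B : Type) (Q1 : pred A) (Q2 : pred B) (k : slot A B) :
  slot_pred (predC Q1) Q1 (predC Q2) Q2 k ->
  oapp Q1 false (lower_part k) = oapp Q2 false (upper_part k).
Proof. by case: k => [e|o i|e] /=; [move/negbTE -> | case/andP=> -> -> | move/negbTE ->]. Qed.

Section Composition.
Variables (G2 G1 : pgraph).
Local Notation V1 := (vtx G1).
Local Notation V2 := (vtx G2).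

Definition glue_slot : slot (V1 * V1) (V2 * V2) -> ((V1 + V2) * (V1 + V2))%type :=
  merge_slot (fun e => (inl e.1, inl e.2)) (fun o i => (inl o.1, inr i.2))
             (fun e => (inr e.1, inr e.2)).

Lemma raw_edges_slots l o i u :
  let ks := l ++ Cross o i :: u in
  edges G1 = pmap lower_part ks -> edges G2 = pmap upper_part ks ->
  all (slot_pred (predC (@is_output G1)) (@is_output G1)
                 (predC (@is_input G2)) (@is_input G2)) ks ->
  all (predC is_upper) l -> all (predC is_lower) u ->
  raw_edges G2 G1 = map glue_slot ks.
Proof.
move=> ks E1 E2 hks nu nl.
have [lo up gl] := blocksP (fun e : V1 * V1 => (inl e.1, inl e.2) : (V1 + V2) * (V1 + V2))
  (fun o i => (inl o.1, inr i.2)) (fun e => (inr e.1, inr e.2)) (lower_closed_cross o i nu nl).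
have hd : (blocks ks).1 = [::].
  by rewrite /ks; case: (l) nu => [_|k l' /andP [nu_k _]]; apply: blocks_head.
rewrite -/ks in lo up gl; move: (blocks_all hks) up gl; rewrite hd /= => hbs up gl.
rewrite /glue_slot gl /raw_edges E1 E2 lo up; set bs := (blocks ks).2 in hbs *.
have -> : chunks_before (@is_output G1) (flatten [seq rcons b.1.1 b.1.2 | b <- bs]) = unzip1 bs.
  rewrite -[RHS](@chunks_before_flatten _ (@is_output G1) (unzip1 bs)) -?map_comp //.
  by rewrite all_map; apply: sub_all hbs => b /= /and4P [-> ->].
have -> : chunks_after (@is_input G2) (flatten [seq b.2.1 :: b.2.2 | b <- bs]) = unzip2 bs.
  rewrite -[RHS](@chunks_after_flatten _ (@is_input G2) (unzip2 bs)) -?map_comp //.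
  by rewrite all_map; apply: sub_all hbs => b /= /and4P [_ _ -> ->].
by rewrite zip_unzip.
Qed.

Local Notation keep := (@keep G2 G1).

Lemma val_restrict_edges (s : seq ((V1 + V2) * (V1 + V2))) :
  all (fun e => keep e.1 && keep e.2) s -> map (emap val) (pmap (@restrict_edge G2 G1) s) = s.
Proof.
elim: s => //= e s IH /andP [/andP [k1 k2] /IH].
rewrite /restrict_edge (insubT (fun x => keep x) k1) (insubT (fun x => keep x) k2) /= => ->.
by case: e k1 k2.
Qed.

End Composition.
Arguments glue_slot {G2 G1}.

Section CompositionEmb.
Variables (X1 Y1 X2 Y2 : pgraph) (f1 : vtx X1 -> vtx Y1) (f2 : vtx X2 -> vtx Y2).
Hypotheses (f1emb : pgraph_emb f1) (f2emb : pgraph_emb f2).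

Definition sum_map (x : (vtx X1 + vtx X2)%type) : (vtx Y1 + vtx Y2)%type :=
  match x with inl a => inl (f1 a) | inr b => inr (f2 b) end.

Lemma keep_sum_map x : @keep Y2 Y1 (sum_map x) = @keep X2 X1 x.
Proof.
by case: x => a; rewrite /keep /is_sink /is_source /= ?(outdeg_emb f1emb) ?(indeg_emb f2emb).
Qed.

Definition comp_map (x : cvtx X2 X1) : cvtx Y2 Y1 :=
  exist _ (sum_map (sval x)) (etrans (keep_sum_map (sval x)) (svalP x)).

Lemma sum_map_inj : injective sum_map.
Proof.
have [i1 _] := f1emb; have [i2 _] := f2emb.
by move=> [a|a] [b|b] //= [e]; [rewrite (i1 _ _ e) | rewrite (i2 _ _ e)].
Qed.

Lemma insub_sum_map x : insub (sum_map x) = omap comp_map (insub x) :> option (cvtx Y2 Y1).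
Proof.
case: insubP => [w kw wx|nk]; case: insubP => [v kv vx|nk'] //=.
- by congr Some; apply: val_inj; rewrite /= wx vx.
- by case/negP: nk'; rewrite -keep_sum_map.
- by case/negP: nk; rewrite keep_sum_map.
Qed.

Lemma raw_edges_emb : raw_edges Y2 Y1 = map (emap sum_map) (raw_edges X2 X1).
Proof.
rewrite /raw_edges; have [_ <-] := f1emb; have [_ <-] := f2emb.
rewrite chunks_before_map chunks_after_map.
rewrite (@eq_chunks_before _ _ (@is_output X1)) => [|e]; last first.
  by rewrite /is_output /= (boundary_emb f1emb).
rewrite (@eq_chunks_after _ _ (@is_input X2)) => [|e]; last first.
  by rewrite /is_input /= (boundary_emb f2emb).
elim: (chunks_before _ _) (chunks_after _ _) => [|c cs IH] [|d ds] //=.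
by rewrite IH !map_cat /= -!map_comp.
Qed.

Lemma pgraph_emb_comp_map : @pgraph_emb (pop_comp X2 X1) (pop_comp Y2 Y1) comp_map.
Proof.
split=> [x y [/sum_map_inj /val_inj] //|].
rewrite /= raw_edges_emb pmap_map -pmap_omap; apply: eq_pmap => e /=.
by rewrite /restrict_edge !insub_sum_map; case: (insub e.1); case: (insub e.2).
Qed.

End CompositionEmb.

Section EdgeListGraphs.
Variables (T : finType) (es : seq (T * T)).

Definition graph_on : pgraph := @PGraph T es.

Definition ends := flatten [seq [:: e.1; e.2] | e <- es].
Definition trim_vtx := {x : T | x \in ends}.

Definition trim_edge (e : T * T) : option (trim_vtx * trim_vtx) :=
  match insub e.1, insub e.2 with Some a, Some b => Some (a, b) | _, _ => None end.

Definition trim_graph : pgraph := @PGraph (trim_vtx : finType) (pmap trim_edge es).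

Lemma endsP x : reflect (exists2 e, e \in es & x = e.1 \/ x = e.2) (x \in ends).
Proof.
apply: (iffP flatten_mapP) => [[e he hx] | [e he ex]]; exists e => //.
- by move: hx; rewrite !inE => /orP [] /eqP; auto.
- by rewrite !inE; case: ex => ->; rewrite eqxx ?orbT.
Qed.

Lemma pgraph_emb_trim : @pgraph_emb trim_graph graph_on val.
Proof.
split; first exact: val_inj.
suff trim_val s : all (fun e => (e.1 \in ends) && (e.2 \in ends)) s ->
    map (emap val) (pmap trim_edge s) = s.
  by apply: trim_val; apply/allP => e he; apply/andP; split; apply/endsP; exists e; auto.
elim: s => //= e s IH /andP [/andP [h1 h2] /IH].
rewrite /trim_edge (insubT (fun x => x \in ends) h1) (insubT (fun x => x \in ends) h2) /= => ->.
by case: e h1 h2.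
Qed.

Lemma acyclic_graph_on (G : pgraph) (psi : T -> vtx G) :
  acyclic G -> {in es, forall e, emap psi e \in edges G} -> acyclic graph_on.
Proof.
move=> acyc hom e /hom /acyc; apply: contra; apply: connect_hom => x y.
exact: hom.
Qed.

End EdgeListGraphs.

(** * Splitting off the last internal vertex *)

Section SplitAtLastInternalVertex.
Variable G : pgraph.
Local Notation V := (vtx G).
Local Notation N := (size (edges G)).
Variables (d : V * V) (a : nat).

Definition edge_at i := nth d (edges G) i.
Local Notation v := (edge_at a).2.

Hypotheses (acycG : acyclic G)
  (degG : forall u : V, (is_source u -> deg u = 1) /\ (is_sink u -> deg u = 1))
  (planarG : planar_seq G)
  (lt_aN : a < N) (internal_v : internal v)
  (a_max : forall i, i < N -> internal (edge_at i).2 -> i <= a).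

Lemma edgesE : edges G = map edge_at (iota 0 N).
Proof. by rewrite /edge_at -{1}(mkseq_nth d (edges G)). Qed.

Lemma mem_edge_at i : i < N -> edge_at i \in edges G.
Proof. exact: mem_nth. Qed.

Lemma adj_edge_at x y : adj x y -> exists2 i, i < N & edge_at i = (x, y).
Proof. by move/(nthP d). Qed.

Lemma outdeg_tail i : i < N -> 0 < outdeg (edge_at i).1.
Proof.
by move=> lt_iN; rewrite -has_count; apply/hasP; exists (edge_at i); rewrite ?mem_edge_at.
Qed.

Lemma indeg_head i : i < N -> 0 < indeg (edge_at i).2.
Proof.
by move=> lt_iN; rewrite -has_count; apply/hasP; exists (edge_at i); rewrite ?mem_edge_at.
Qed.

Lemma no_reach_back i j : i < j -> j < N -> ~~ reaches (edge_at j) (edge_at i).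
Proof.
move=> lt_ij lt_jN; have /andP [/(pairwiseP d) pw _] := planarG.
by apply: pw; rewrite ?inE //; apply: ltn_trans lt_ij lt_jN.
Qed.

Lemma reach_between i j k : i < j -> j < k -> k < N -> reaches (edge_at i) (edge_at k) ->
  reaches (edge_at i) (edge_at j) || reaches (edge_at j) (edge_at k).
Proof.
move=> lt_ij lt_jk lt_kN; have /andP [_ /(triplewiseP _ d) tw] := planarG.
exact/implyP/tw.
Qed.

Lemma internal_deg (u : V) : internal u -> 0 < indeg u /\ 0 < outdeg u.
Proof.
have [src snk] := degG u; rewrite /internal /boundary !lt0n => /eqP ndeg.
by split; apply/negP => /eqP z; apply: ndeg; [apply: src | apply: snk]; apply/eqP.
Qed.

Lemma sinkP (u : V) : 0 < indeg u -> reflect (is_sink u) (boundary u).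
Proof.
rewrite /boundary /deg /is_sink => in_u; apply: (iffP eqP) => [|/eqP s]; first lia.
by have := (degG u).2; rewrite /is_sink /deg s => ->.
Qed.

Lemma head_sink i : i < N -> boundary (edge_at i).2 -> is_sink (edge_at i).2.
Proof. by move=> lt_iN /(sinkP (indeg_head lt_iN)). Qed.

Lemma leave_v i : i < N -> (edge_at i).1 = v -> a < i /\ is_sink (edge_at i).2.
Proof.
move=> lt_iN tail_i; have lt_ai : a < i.
  case: ltngtP => // [lt_ia | eq_ai]; last first.
    by have := acycG (mem_edge_at lt_aN); rewrite -eq_ai in tail_i; rewrite tail_i connect0.
  by have := no_reach_back lt_ia lt_aN; rewrite /reaches tail_i connect0.
split=> //; apply: head_sink => //; apply: contraT => int_i.
by have := a_max lt_iN int_i; rewrite leqNgt lt_ai.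
Qed.

Lemma reach_from_v (w : V) : connect (@adj G) v w -> w = v \/ is_sink w.
Proof.
move=> /connectP [[|z p] /=]; first by left.
case/andP=> /adj_edge_at [i lt_iN ei] pz w_last; right.
have [_] := leave_v lt_iN (congr1 fst ei); rewrite ei /= => sink_z.
have -> : w = z by apply: connect_noout (no_adj_outdeg0 (eqP sink_z)) _; apply/connectP; exists p.
exact: sink_z.
Qed.

Lemma between_enter_leave i j k : i < j -> j < k -> k < N ->
  (edge_at i).2 = v -> (edge_at k).1 = v ->
  [\/ (edge_at j).1 = v, (edge_at j).2 = v | internal (edge_at j).2].
Proof.
move=> lt_ij lt_jk lt_kN head_i tail_k; have lt_jN := ltn_trans lt_jk lt_kN.
have := reach_between lt_ij lt_jk lt_kN; rewrite /reaches head_i tail_k connect0.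
case/(_ isT)/orP => [/reach_from_v [-> | sink_j] | reach_v].
- by constructor 1.
- by move: (outdeg_tail lt_jN); rewrite (eqP sink_j).
- have [int_j | /negPn /(head_sink lt_jN) sink_j] := boolP (internal (edge_at j).2).
    by constructor 3.
  by rewrite (connect_noout (no_adj_outdeg0 (eqP sink_j)) reach_v); constructor 2.
Qed.

Lemma leave_before_enter i j : i < j -> j < N ->
  (edge_at i).1 = v -> (edge_at j).2 = v -> False.
Proof.
move=> lt_ij lt_jN tail_i head_j; have [lt_ai _] := leave_v (ltn_trans lt_ij lt_jN) tail_i.
have := a_max lt_jN; rewrite head_j => /(_ internal_v).
by rewrite leqNgt (ltn_trans lt_ai lt_ij).
Qed.

Lemma leave_v_exists : exists2 i, i < N & (edge_at i).1 = v.
Proof.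
have [_] := internal_deg internal_v; rewrite /outdeg -has_count => /hasP [e].
by case/(nthP d) => i lt_iN ei /eqP tail_e; exists i; rewrite // /edge_at ei.
Qed.

Local Notation A := (V + 'I_N)%type.

Definition idx i : 'I_N := insubd (Ordinal lt_aN) i.

Lemma idx_val i : i < N -> val (idx i) = i.
Proof. by move=> lt_iN; rewrite val_insubd lt_iN. Qed.

Lemma idx_eq i j : i < N -> j < N -> (idx i == idx j) = (i == j).
Proof. by move=> lt_iN lt_jN; rewrite -val_eqE /= !idx_val. Qed.

(* [inr (idx i)] is a fresh boundary vertex cutting edge [i]: a sink of the lower
   factor when [i] enters [v], and a source of the upper factor when [i] enters [v]
   or a sink without leaving [v]. *)
Definition lower_head i : A := if (edge_at i).2 == v then inr (idx i) else inl (edge_at i).2.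
Definition upper_tail i : A := if (edge_at i).1 == v then inl v else inr (idx i).
Definition in_upper i := [|| (edge_at i).1 == v, (edge_at i).2 == v | boundary (edge_at i).2].

Definition slot_of i : slot (A * A) (A * A) :=
  if (edge_at i).1 == v then Upper (upper_tail i, inl (edge_at i).2)
  else if ((edge_at i).2 == v) || boundary (edge_at i).2
  then Cross (inl (edge_at i).1, lower_head i) (upper_tail i, inl (edge_at i).2)
  else Lower (inl (edge_at i).1, lower_head i).

Definition slots := map slot_of (iota 0 N).
Definition lower_edges := pmap lower_part slots.
Definition upper_edges := pmap upper_part slots.
Local Notation GL := (graph_on lower_edges).
Local Notation GU := (graph_on upper_edges).

Lemma lower_part_slot i : lower_part (slot_of i) =
  if (edge_at i).1 != v then Some (inl (edge_at i).1, lower_head i) else None.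
Proof. by rewrite /slot_of; case: eqP => //= _; case: ifP. Qed.

Lemma upper_part_slot i :
  upper_part (slot_of i) = if in_upper i then Some (upper_tail i, inl (edge_at i).2) else None.
Proof. by rewrite /slot_of /in_upper; case: eqP => //= _; case: ifP. Qed.

Lemma lower_edgesP x : reflect
  (exists2 i, i < N & (edge_at i).1 != v /\ x = (inl (edge_at i).1, lower_head i))
  (x \in lower_edges).
Proof.
rewrite /lower_edges /slots pmap_map mem_pmap; apply: (iffP mapP) => [[i] | [i lt_iN [tail_i ->]]].
- by rewrite mem_iota /= lower_part_slot; case: ifP => // tail_i lt_iN [->]; exists i.
- by exists i; rewrite ?mem_iota //= lower_part_slot tail_i.
Qed.

Lemma upper_edgesP x : reflect
  (exists2 i, i < N & in_upper i /\ x = (upper_tail i, inl (edge_at i).2))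
  (x \in upper_edges).
Proof.
rewrite /upper_edges /slots pmap_map mem_pmap; apply: (iffP mapP) => [[i] | [i lt_iN [up_i ->]]].
- by rewrite mem_iota /= upper_part_slot; case: ifP => // up_i lt_iN [->]; exists i.
- by exists i; rewrite ?mem_iota //= upper_part_slot up_i.
Qed.

Lemma count_lower_edges (P : pred (A * A)) : count P lower_edges =
  count (fun i => ((edge_at i).1 != v) && P (inl (edge_at i).1, lower_head i)) (iota 0 N).
Proof.
rewrite /lower_edges /slots pmap_map count_pmap; apply: eq_count => i /=.
by rewrite lower_part_slot; case: ifP.
Qed.

Lemma count_upper_edges (P : pred (A * A)) : count P upper_edges =
  count (fun i => in_upper i && P (upper_tail i, inl (edge_at i).2)) (iota 0 N).
Proof.
rewrite /upper_edges /slots pmap_map count_pmap; apply: eq_count => i /=.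
by rewrite upper_part_slot; case: ifP.
Qed.

Lemma count_edges (P : pred (V * V)) :
  count P (edges G) = count (fun i => P (edge_at i)) (iota 0 N).
Proof. by rewrite {1}edgesE count_map. Qed.


Lemma inl_eq (x y : V) : (inl x == inl y :> A) = (x == y). Proof. by []. Qed.
Lemma inr_eq (x y : 'I_N) : (inr x == inr y :> A) = (x == y). Proof. by []. Qed.
Lemma inl_inr (x : V) y : (inl x == inr y :> A) = false. Proof. by []. Qed.
Lemma inr_inl (x : V) y : (inr y == inl x :> A) = false. Proof. by []. Qed.
Let sumE := (inl_eq, inr_eq, inl_inr, inr_inl).

Lemma outdeg_lower_inl (u : V) : u != v -> @outdeg GL (inl u) = outdeg u.
Proof.
move=> uv; rewrite /outdeg count_lower_edges count_edges; apply: eq_count => i /=.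
by rewrite sumE; case: ((edge_at i).1 =P u) => [->|]; rewrite ?uv ?andbF.
Qed.

Lemma outdeg_lower_inr j : @outdeg GL (inr j) = 0.
Proof. by rewrite /outdeg count_lower_edges; apply: count_predF => i /=; rewrite sumE andbF. Qed.

Lemma outdeg_lower_v : @outdeg GL (inl v) = 0.
Proof.
by rewrite /outdeg count_lower_edges; apply: count_predF => i /=; rewrite sumE; case: eqP.
Qed.

Lemma indeg_lower_inl (u : V) : u != v -> @indeg GL (inl u) =
  count (fun i => ((edge_at i).1 != v) && ((edge_at i).2 == u)) (iota 0 N).
Proof.
move=> uv; rewrite /indeg count_lower_edges; apply: eq_count => i /=; rewrite /lower_head.
by case: ((edge_at i).2 =P v) => [->|_]; rewrite sumE // (eq_sym v u) (negbTE uv) andbF.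
Qed.

Lemma indeg_lower_inr i : i < N ->
  @indeg GL (inr (idx i)) = ((edge_at i).1 != v) && ((edge_at i).2 == v).
Proof.
move=> lt_iN; rewrite /indeg count_lower_edges -(count_iota_eq _ lt_iN).
apply: eq_in_count => j; rewrite mem_iota /= /lower_head => lt_jN.
case: (j =P i) => [->|ne_ji].
- by case: ((edge_at i).2 =P v) => head_i; rewrite ?sumE ?eqxx ?andbT ?andbF //= head_i eqxx.
- case: ((edge_at j).2 =P v) => _; rewrite ?sumE ?andbF //= idx_eq //.
  by rewrite (introF eqP ne_ji) andbF.
Qed.

Lemma indeg_split (u : V) : indeg u =
  count (fun i => ((edge_at i).1 != v) && ((edge_at i).2 == u)) (iota 0 N) +
  count (fun i => ((edge_at i).1 == v) && ((edge_at i).2 == u)) (iota 0 N).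
Proof.
rewrite /indeg count_edges -size_filter -(count_predC (fun i => (edge_at i).1 != v)).
by rewrite !count_filter; congr (_ + _); apply: eq_count => i; rewrite /= ?negbK.
Qed.

Lemma count_from_v_eq0 (u : V) : u != v ->
  (~~ is_sink u \/ exists2 i, i < N & ((edge_at i).1 != v) && ((edge_at i).2 == u)) ->
  count (fun i => ((edge_at i).1 == v) && ((edge_at i).2 == u)) (iota 0 N) = 0.
Proof.
move=> uv hu; apply/eqP; rewrite -leqn0 leqNgt -has_count.
apply/hasP => -[j]; rewrite mem_iota /= => lt_jN /andP [/eqP tail_j /eqP head_j].
have [_] := leave_v lt_jN tail_j; rewrite head_j => sink_u.
case: hu => [/negP // | [i lt_iN other_i]].
have := (degG u).2 sink_u; rewrite /deg (eqP sink_u) addn0 indeg_split.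
have in1 : has (fun i => ((edge_at i).1 != v) && ((edge_at i).2 == u)) (iota 0 N).
  by apply/hasP; exists i; rewrite ?mem_iota.
have in2 : has (fun i => ((edge_at i).1 == v) && ((edge_at i).2 == u)) (iota 0 N).
  by apply/hasP; exists j; rewrite ?mem_iota ?tail_j ?head_j ?eqxx.
by rewrite !has_count in in1 in2; lia.
Qed.

Lemma degs_lower_inl (u : V) : u != v ->
  (~~ is_sink u \/ exists2 i, i < N & ((edge_at i).1 != v) && ((edge_at i).2 == u)) ->
  @indeg GL (inl u) = indeg u /\ @outdeg GL (inl u) = outdeg u.
Proof.
move=> uv hu; split; last exact: outdeg_lower_inl.
by rewrite indeg_lower_inl // indeg_split count_from_v_eq0 // addn0.
Qed.

Lemma deg_lower_inl (u : V) : u != v ->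
  (~~ is_sink u \/ exists2 i, i < N & ((edge_at i).1 != v) && ((edge_at i).2 == u)) ->
  @deg GL (inl u) = deg u.
Proof. by move=> uv hu; have [din dout] := degs_lower_inl uv hu; rewrite /deg din dout. Qed.

Lemma boundary_lower_inr i : i < N -> (edge_at i).1 != v -> (edge_at i).2 == v ->
  @boundary GL (inr (idx i)).
Proof.
move=> lt_iN tail_i head_i.
by rewrite /boundary /deg outdeg_lower_inr indeg_lower_inr // tail_i head_i.
Qed.

Lemma outdeg_upper_inl (u : V) : u != v -> @outdeg GU (inl u) = 0.
Proof.
move=> uv; rewrite /outdeg count_upper_edges; apply: count_predF => i /=; rewrite /upper_tail.
by case: ((edge_at i).1 =P v) => _; rewrite sumE ?(eq_sym v u) ?(negbTE uv) andbF.
Qed.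

Lemma indeg_upper_inr j : @indeg GU (inr j) = 0.
Proof. by rewrite /indeg count_upper_edges; apply: count_predF => i /=; rewrite sumE andbF. Qed.

Lemma outdeg_upper_inr i : i < N ->
  @outdeg GU (inr (idx i)) = in_upper i && ((edge_at i).1 != v).
Proof.
move=> lt_iN; rewrite /outdeg count_upper_edges -(count_iota_eq _ lt_iN).
apply: eq_in_count => j; rewrite mem_iota /= /upper_tail => lt_jN.
case: (j =P i) => [->|ne_ji].
- by case: ((edge_at i).1 =P v) => _; rewrite sumE ?andbF ?eqxx.
- case: ((edge_at j).1 =P v) => _; rewrite sumE ?andbF //= idx_eq //.
  by rewrite (introF eqP ne_ji) andbF.
Qed.

Lemma indeg_upper_inl (u : V) : (u == v) || boundary u -> @indeg GU (inl u) = indeg u.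
Proof.
move=> hu; rewrite /indeg count_upper_edges count_edges; apply: eq_count => i /=.
rewrite sumE; case: eqP => [head_i|]; last by rewrite andbF.
by rewrite andbT /in_upper head_i; case/orP: hu => ->; rewrite ?orbT.
Qed.

Lemma indeg_upper_v_gt0 : 0 < @indeg GU (inl v).
Proof. by rewrite indeg_upper_inl ?eqxx //; have [] := internal_deg internal_v. Qed.

Lemma outdeg_upper_v_gt0 : 0 < @outdeg GU (inl v).
Proof.
have [i lt_iN tail_i] := leave_v_exists.
have /adj_outdeg : @adj GU (upper_tail i) (inl (edge_at i).2).
  by apply/upper_edgesP; exists i; rewrite // /in_upper tail_i eqxx.
by rewrite /upper_tail tail_i eqxx.
Qed.

Lemma boundary_upper_inr i : i < N -> in_upper i -> (edge_at i).1 != v ->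
  @boundary GU (inr (idx i)).
Proof.
move=> lt_iN up_i tail_i.
by rewrite /boundary /deg indeg_upper_inr outdeg_upper_inr // up_i tail_i.
Qed.


Lemma boundary_upper_v : @boundary GU (inl v) = false.
Proof. by rewrite /boundary /deg; move: indeg_upper_v_gt0 outdeg_upper_v_gt0; lia. Qed.

Lemma slot_of_pred i : i < N ->
  slot_pred (predC (@is_output GL)) (@is_output GL) (predC (@is_input GU)) (@is_input GU)
            (slot_of i).
Proof.
move=> lt_iN; have [tail_i | tail_i] := boolP ((edge_at i).1 == v); rewrite /slot_of ?tail_i.
  by rewrite /= /is_input /upper_tail tail_i /= boundary_upper_v.
rewrite (negbTE tail_i).
have up_i : ((edge_at i).2 == v) || boundary (edge_at i).2 -> in_upper i.
  by rewrite /in_upper => ->; rewrite orbT.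
case: ifP => [/up_i {}up_i | /negbT]; rewrite /= /is_output /is_input /=.
  rewrite /upper_tail (negbTE tail_i) boundary_upper_inr // andbT /lower_head.
  case: ((edge_at i).2 =P v) => [/eqP head_i | /eqP head_i]; first exact: boundary_lower_inr.
  rewrite /boundary deg_lower_inl //; last by right; exists i; rewrite ?tail_i ?eqxx.
  by move: up_i; rewrite /in_upper (negbTE tail_i) (negbTE head_i).
rewrite negb_or /lower_head => /andP [head_i int_i]; rewrite (negbTE head_i) /=.
rewrite /boundary deg_lower_inl //; left.
by rewrite /is_sink -lt0n; have [] := internal_deg int_i.
Qed.

Lemma slot_of_a : slot_of a = Cross (inl (edge_at a).1, lower_head a) (upper_tail a, inl v).
Proof.
have tail_a : (edge_at a).1 != v.
  by apply/eqP => e; have := acycG (mem_edge_at lt_aN); rewrite e connect0.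
by rewrite /slot_of (negbTE tail_a) eqxx.
Qed.

Lemma slots_split :
  slots = map slot_of (iota 0 a) ++ slot_of a :: map slot_of (iota a.+1 (N - a.+1)).
Proof.
rewrite /slots -map_cons -map_cat; congr map.
by rewrite -{1}(subnKC (ltnW lt_aN)) iotaD add0n -(subnSK lt_aN).
Qed.

Lemma no_upper_before_a : all (predC is_upper) (map slot_of (iota 0 a)).
Proof.
rewrite all_map; apply/allP => i; rewrite mem_iota /= /slot_of => lt_ia.
case: ((edge_at i).1 =P v) => [tail_i | _]; last by case: ifP.
by have [/ltnW] := leave_v (ltn_trans lt_ia lt_aN) tail_i; rewrite leqNgt lt_ia.
Qed.

Lemma no_lower_after_a : all (predC is_lower) (map slot_of (iota a.+1 (N - a.+1))).
Proof.
rewrite all_map; apply/allP => i; rewrite mem_iota subnKC // /= /slot_of => /andP [lt_ai lt_iN].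
case: eqP => // _; case: ifP => //= /negbT; rewrite negb_or => /andP [_ int_i].
by have := a_max lt_iN int_i; rewrite leqNgt lt_ai.
Qed.

(* The cut vertices [inr (inr _)] and [inl (inr _)] are deleted by the composition,
   so the value [v] in the last case is never used. *)
Definition unglue (x : (A + A)%type) : V :=
  match x with inl (inl u) | inr (inl u) => u | _ => v end.

Local Notation glue := (@glue_slot GU GL).

Lemma raw_edges_split : raw_edges GU GL = map glue slots.
Proof.
rewrite slots_split slot_of_a; apply: raw_edges_slots; rewrite -?slot_of_a -?slots_split //.
- by rewrite all_map; apply/allP => i; rewrite mem_iota => /= lt_iN; apply: slot_of_pred.
- exact: no_upper_before_a.
- exact: no_lower_after_a.
Qed.

Lemma unglue_slot i : emap unglue (glue (slot_of i)) = edge_at i.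
Proof.
rewrite /slot_of /lower_head /upper_tail /emap.
have [tail_i | tail_i] := boolP ((edge_at i).1 == v); rewrite ?tail_i /=.
  by rewrite -(eqP tail_i); case: (edge_at i).
by case: ifP => [_ | /norP [/negbTE -> _]] /=; case: (edge_at i).
Qed.

Local Notation keep := (@keep GU GL).

Lemma keep_glue_slot i : i < N -> keep (glue (slot_of i)).1 && keep (glue (slot_of i)).2.
Proof.
move=> lt_iN; rewrite /slot_of.
have in_up i' : in_upper i' -> i' < N -> 0 < @indeg GU (inl (edge_at i').2).
  by move=> up lt; apply: (@adj_indeg GU _ (upper_tail i')); apply/upper_edgesP; exists i'.
have [tail_i | tail_i] := boolP ((edge_at i).1 == v);
  rewrite ?tail_i /= /is_sink /is_source -?lt0n.
  by rewrite /upper_tail tail_i indeg_upper_v_gt0 in_up // /in_upper tail_i.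
have out_lo : 0 < @outdeg GL (inl (edge_at i).1).
  by apply: (@adj_outdeg GL _ (lower_head i)); apply/lower_edgesP; exists i.
case: ifP => [up | /norP [head_i int_i]]; rewrite /= /is_sink /is_source -!lt0n.
  by rewrite out_lo in_up // /in_upper up orbT.
rewrite out_lo /lower_head (negbTE head_i) outdeg_lower_inl //.
by have [] := internal_deg int_i.
Qed.

Lemma keep_inl (y : A) : keep (inl y) -> exists2 u, y = inl u & u != v /\ ~~ is_sink u.
Proof.
case: y => [u|j]; rewrite /keep /is_sink; last by rewrite outdeg_lower_inr.
have [-> | uv] := eqVneq u v; first by rewrite outdeg_lower_v.
by rewrite outdeg_lower_inl // => su; exists u.
Qed.

Lemma keep_inr (y : A) : keep (inr y) -> exists2 u, y = inl u & u = v \/ is_sink u.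
Proof.
case: y => [u|j]; rewrite /keep /is_source; last by rewrite indeg_upper_inr.
move=> in_u; exists u => //; have [-> | uv] := eqVneq u v; [by left | right].
move: in_u; rewrite -lt0n /indeg count_upper_edges -has_count => /hasP [i].
rewrite mem_iota /= sumE => lt_iN /andP [up /eqP head_i].
case/or3P: up => [/eqP tail_i | /eqP head_v | bnd].
- by have [] := leave_v lt_iN tail_i; rewrite head_i.
- by rewrite -head_i head_v eqxx in uv.
- by rewrite -head_i; apply: head_sink.
Qed.

Lemma unglue_inj : injective (fun x : cvtx GU GL => unglue (val x)).
Proof.
move=> [[x|x] kx] [[y|y] ky] /= eq_xy; apply: val_inj => /=.
- have [u ex _] := keep_inl kx; have [w ey _] := keep_inl ky.
  by move: eq_xy; rewrite ex ey /= => ->.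
- have [u ex [uv su]] := keep_inl kx; have [w ey hw] := keep_inr ky.
  move: eq_xy; rewrite ex ey /= => euw; rewrite -euw in hw.
  by case: hw => [/eqP | sink_u]; [rewrite (negbTE uv) | rewrite sink_u in su].
- have [u ex hu] := keep_inr kx; have [w ey [wv sw]] := keep_inl ky.
  move: eq_xy; rewrite ex ey /= => euw; rewrite euw in hu.
  by case: hu => [/eqP | sink_w]; [rewrite (negbTE wv) | rewrite sink_w in sw].
- have [u ex _] := keep_inr kx; have [w ey _] := keep_inr ky.
  by move: eq_xy; rewrite ex ey /= => ->.
Qed.

Lemma pgraph_emb_unglue : @pgraph_emb (pop_comp GU GL) G (fun x => unglue (val x)).
Proof.
split; first exact: unglue_inj.
have kept : all (fun e => keep e.1 && keep e.2) (map glue slots).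
  rewrite /slots -map_comp all_map; apply/allP => i; rewrite mem_iota => /= lt_iN.
  exact: keep_glue_slot.
rewrite /= raw_edges_split (map_comp (emap unglue) (emap val)) (val_restrict_edges kept).
by rewrite -map_comp [RHS]edgesE /slots -map_comp; apply: eq_map => i; apply: unglue_slot.
Qed.

Lemma vertex_on_edge (y : V) : exists2 e, e \in edges G & y = e.1 \/ y = e.2.
Proof.
have [src _] := degG y; have [/eqP in0 | ] := boolP (is_source y).
  have := src (introT eqP in0); rewrite /deg in0 add0n => out1.
  have : 0 < outdeg y by rewrite out1.
  by rewrite /outdeg -has_count => /hasP [e he /eqP <-]; exists e; auto.
by rewrite /is_source -lt0n /indeg -has_count => /hasP [e he /eqP <-]; exists e; auto.
Qed.

Definition lower_proj (x : A) : V := if x is inl u then u else v.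
Definition upper_proj (x : A) : V := match x with inl u => u | inr j => (edge_at j).1 end.

Lemma lower_proj_head i : lower_proj (lower_head i) = (edge_at i).2.
Proof. by rewrite /lower_head; case: eqP. Qed.

Lemma upper_proj_tail i : i < N -> upper_proj (upper_tail i) = (edge_at i).1.
Proof. by move=> lt_iN; rewrite /upper_tail; case: eqP => //= _; rewrite idx_val. Qed.

Lemma lower_proj_edge x : x \in lower_edges -> emap lower_proj x \in edges G.
Proof.
case/lower_edgesP => i lt_iN [_ ->]; rewrite /emap /= lower_proj_head.
by rewrite -surjective_pairing mem_edge_at.
Qed.

Lemma upper_proj_edge x : x \in upper_edges -> emap upper_proj x \in edges G.
Proof.
case/upper_edgesP => i lt_iN [_ ->]; rewrite /emap /= upper_proj_tail //.
by rewrite -surjective_pairing mem_edge_at.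
Qed.

Lemma acyclic_lower : acyclic GL.
Proof. exact: acyclic_graph_on acycG lower_proj_edge. Qed.

Lemma acyclic_upper : acyclic GU.
Proof. exact: acyclic_graph_on acycG upper_proj_edge. Qed.

Lemma connect_lower_proj x y :
  connect (@adj GL) x y -> connect (@adj G) (lower_proj x) (lower_proj y).
Proof. by apply: connect_hom => p q /lower_proj_edge. Qed.

Lemma connect_lower_avoid (z w : V) : z != v -> w != v -> ~~ is_sink w ->
  connect (@adj G) z w -> connect (@adj GL) (inl z) (inl w).
Proof.
move=> zv wv nsink_w /connectP [p]; elim: p z zv => [|z1 p IH] z zv /=; first by move=> _ ->.
case/andP=> /adj_edge_at [i lt_iN ei] pz1 w_last.
have z1v : z1 != v.
  apply/eqP => e; have : connect (@adj G) z1 w by apply/connectP; exists p.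
  rewrite e => /reach_from_v [wv' | sink_w]; first by rewrite wv' eqxx in wv.
  by rewrite sink_w in nsink_w.
apply: connect_trans (IH z1 z1v pz1 w_last); apply: connect1.
have tail_i : (edge_at i).1 != v by rewrite ei.
have : (inl (edge_at i).1, lower_head i) \in lower_edges by apply/lower_edgesP; exists i.
by rewrite /lower_head ei /= (negbTE z1v).
Qed.

Lemma reaches_lower i j : j < N -> (edge_at j).1 != v ->
  reaches (edge_at i) (edge_at j) -> connect (@adj GL) (lower_head i) (inl (edge_at j).1).
Proof.
move=> lt_jN tail_j; rewrite /reaches /lower_head.
have nsink_j : ~~ is_sink (edge_at j).1 by rewrite /is_sink -lt0n outdeg_tail.
case: ((edge_at i).2 =P v) => [-> /reach_from_v [tv | sink_j] | /eqP head_i].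
- by rewrite tv eqxx in tail_j.
- by rewrite sink_j in nsink_j.
- exact: connect_lower_avoid.
Qed.

Lemma planar_lower : planar_seq GL.
Proof.
rewrite /planar_seq /= /lower_edges /slots.
apply/andP; split.
- apply: pairwise_pmap; rewrite pairwise_map; apply: pairwise_iota => i j lt_ij lt_jN.
  rewrite /relpre /= !lower_part_slot; case: ifP => //= _; case: ifP => //= _.
  apply/negP => /connect_lower_proj; rewrite lower_proj_head /= => reach_ij.
  by have := no_reach_back lt_ij lt_jN; rewrite /reaches reach_ij.
- apply: triplewise_pmap; rewrite triplewise_map; apply: triplewise_iota => i j k lt_ij lt_jk lt_kN.
  have lt_jN := ltn_trans lt_jk lt_kN.
  rewrite /= !lower_part_slot.
  case: ((edge_at i).1 != v) => //=; case tail_j: ((edge_at j).1 != v) => //=.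
  case tail_k: ((edge_at k).1 != v) => //=.
  apply/implyP => /connect_lower_proj; rewrite lower_proj_head /= => reach_ik.
  have := reach_between lt_ij lt_jk lt_kN; rewrite /reaches reach_ik.
  by case/(_ isT)/orP => /reaches_lower -> //; rewrite ?orbT.
Qed.

Lemma connect_upper i j : j < N -> connect (@adj GU) (inl (edge_at i).2) (upper_tail j) ->
  (edge_at i).2 = v /\ (edge_at j).1 = v.
Proof.
move=> lt_jN; rewrite /upper_tail; case: ((edge_at j).1 =P v) => [tail_j | _].
  case: ((edge_at i).2 =P v) => // /eqP head_i.
  move/(connect_noout (no_adj_outdeg0 (outdeg_upper_inl head_i))) => [/eqP].
  by rewrite eq_sym (negbTE head_i).
by move/(connect_noin (no_adj_indeg0 (indeg_upper_inr _))).
Qed.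

Lemma planar_upper : planar_seq GU.
Proof.
rewrite /planar_seq /= /upper_edges /slots; apply/andP; split.
- apply: pairwise_pmap; rewrite pairwise_map; apply: pairwise_iota => i j lt_ij lt_jN.
  rewrite /relpre /= !upper_part_slot; case: ifP => //= _; case: ifP => //= _.
  apply/negP => /(connect_upper (ltn_trans lt_ij lt_jN)) [head_j tail_i].
  exact: leave_before_enter lt_ij lt_jN tail_i head_j.
- apply: triplewise_pmap; rewrite triplewise_map; apply: triplewise_iota => i j k lt_ij lt_jk lt_kN.
  rewrite /= !upper_part_slot; case: (in_upper i) => //=; case up_j: (in_upper j) => //=.
  case: (in_upper k) => //=; apply/implyP => /(connect_upper lt_kN) [head_i tail_k].
  have reach_v l m : (edge_at l).2 = v -> (edge_at m).1 = v ->
      connect (@adj GU) (inl (edge_at l).2) (upper_tail m).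
    by move=> head_l tail_m; rewrite /upper_tail tail_m head_l eqxx.
  rewrite /reaches /=; case: (between_enter_leave lt_ij lt_jk lt_kN head_i tail_k).
  + by move=> tail_j; rewrite (reach_v i j head_i tail_j).
  + by move=> head_j; rewrite (reach_v j k head_j tail_k) orbT.
  + move=> int_j; move: up_j; rewrite /in_upper => /or3P [/eqP tail_j | /eqP head_j | bnd_j].
    * by rewrite (reach_v i j head_i tail_j).
    * by rewrite (reach_v j k head_j tail_k) orbT.
    * by rewrite /internal bnd_j in int_j.
Qed.

Lemma deg_lower_ends x : x \in ends lower_edges ->
  (@is_source GL x -> @deg GL x = 1) /\ (@is_sink GL x -> @deg GL x = 1).
Proof.
have same (u : V) : @indeg GL (inl u) = indeg u /\ @outdeg GL (inl u) = outdeg u ->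
    (@is_source GL (inl u) -> @deg GL (inl u) = 1) /\ (@is_sink GL (inl u) -> @deg GL (inl u) = 1).
  by case=> din dout; rewrite /is_source /is_sink /deg din dout; apply: degG.
case/endsP => e /lower_edgesP [i lt_iN [tail_i ->]] [->|->] /=.
  by apply/same/degs_lower_inl => //; left; rewrite /is_sink -lt0n outdeg_tail.
rewrite /lower_head; case: eqP => [/eqP head_i | /eqP head_i].
  by have /eqP := boundary_lower_inr lt_iN tail_i head_i.
by apply/same/degs_lower_inl => //; right; exists i; rewrite ?tail_i ?eqxx.
Qed.

Lemma deg_upper_ends x : x \in ends upper_edges -> x = inl v \/ @deg GU x = 1.
Proof.
case/endsP => e /upper_edgesP [i lt_iN [up_i ->]] [->|->] /=.
  rewrite /upper_tail; case: eqP => [_ | /eqP tail_i]; [by left | right].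
  exact/eqP/boundary_upper_inr.
have [-> | head_i] := eqVneq (edge_at i).2 v; [by left | right].
have sink_i : is_sink (edge_at i).2.
  move: up_i; rewrite /in_upper (negbTE head_i) /= => /orP [/eqP tail_i | bnd_i].
    by have [] := leave_v lt_iN tail_i.
  exact: head_sink.
have deg1 := (degG _).2 sink_i.
rewrite /deg outdeg_upper_inl // addn0 indeg_upper_inl; last by rewrite /boundary deg1 eqxx orbT.
by move: deg1; rewrite /deg (eqP sink_i) addn0.
Qed.

Lemma size_lower_edges : size lower_edges < N.
Proof.
have [i lt_iN tail_i] := leave_v_exists.
rewrite /lower_edges size_pmap /slots count_map -[X in _ < X](size_iota 0 N).
rewrite -(count_predC (preim slot_of lower_part)) -[X in X < _]addn0 ltn_add2l.
rewrite -has_count; apply/hasP; exists i; first by rewrite mem_iota.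
by rewrite /= lower_part_slot tail_i eqxx.
Qed.

Lemma count_output_lower : count (@is_output GL) lower_edges = count (@is_input GU) upper_edges.
Proof.
rewrite /lower_edges /upper_edges /slots !count_pmap !count_map.
apply: eq_in_count => i; rewrite mem_iota => /= lt_iN.
exact/slot_pred_parts/slot_of_pred.
Qed.

Local Notation Glo := (trim_graph lower_edges).
Local Notation Gup := (trim_graph upper_edges).

Lemma is_pop_lower : is_pop Glo.
Proof.
apply: (is_pop_emb (pgraph_emb_trim _)) acyclic_lower planar_lower _.
by move=> x; apply: deg_lower_ends (valP x).
Qed.

Lemma elementary_pop_upper : elementary_pop Gup.
Proof.
have femb := pgraph_emb_trim upper_edges; split.
- apply: (is_pop_emb femb) acyclic_upper planar_upper _ => x.
  case: (deg_upper_ends (valP x)) => [/= -> | ->] //.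
  by split=> /eqP deg0; [move: indeg_upper_v_gt0 | move: outdeg_upper_v_gt0]; rewrite deg0.
- apply: (elementary_emb femb) => x y; rewrite /internal /boundary.
  case: (deg_upper_ends (valP x)) => [ex | ->] //; case: (deg_upper_ends (valP y)) => [ey | ->] //.
  by move=> _ _; apply: val_inj; rewrite ex ey.
Qed.

Lemma size_edges_lower : size (edges Glo) < N.
Proof.
have [_ fe] := pgraph_emb_trim lower_edges.
by rewrite -(size_map (emap val)) fe; apply: size_lower_edges.
Qed.

Lemma composable_lower_upper : composable Glo Gup.
Proof.
rewrite /composable -(count_output_emb (pgraph_emb_trim lower_edges)).
rewrite -(count_input_emb (pgraph_emb_trim upper_edges)).
exact: count_output_lower.
Qed.

Lemma pop_iso_comp_split (X : pgraph) (f : vtx X -> vtx Glo) :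
  pgraph_emb f -> pop_iso (pop_comp Gup X) G.
Proof.
move=> femb.
have emb_comp := pgraph_emb_comp_map femb (pgraph_emb_id Gup).
have emb_trim := pgraph_emb_comp_map (pgraph_emb_trim lower_edges) (pgraph_emb_trim upper_edges).
have hemb := pgraph_emb_comp (pgraph_emb_comp emb_comp emb_trim) pgraph_emb_unglue.
apply: (pop_iso_emb hemb) => y; have [e he ye] := vertex_on_edge y.
have [_ fe] := hemb; rewrite -fe in he; case/mapP: he => c _ ec.
by case: ye; rewrite ec => ->; eexists.
Qed.

End SplitAtLastInternalVertex.

Lemma pop_peel (G : pgraph) (u : vtx G) : is_pop G -> internal u ->
  exists (G' E : pgraph), [/\ is_pop G', size (edges G') < size (edges G), elementary_pop E,
    composable G' E & forall X (f : vtx X -> vtx G'), pgraph_emb f -> pop_iso (pop_comp E X) G].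
Proof.
move=> [[acyc degs] /planarP pl] int_u.
have : 0 < indeg u.
  rewrite lt0n; apply: contra int_u => src_u.
  by rewrite /boundary (degs u).1.
rewrite -has_count => /hasP [d hd /eqP du].
have ex_int : exists i, (i < size (edges G)) && internal (nth d (edges G) i).2.
  by case/(nthP d): hd => i lt_iN ei; exists i; rewrite lt_iN ei du.
have ub_int i : (i < size (edges G)) && internal (nth d (edges G) i).2 -> i <= size (edges G).
  by case/andP=> /ltnW.
have [a /andP [lt_aN int_a] a_max] := ex_maxnP ex_int ub_int.
have a_last i : i < size (edges G) -> internal (edge_at d i).2 -> i <= a.
  by move=> lt_iN int_i; apply: a_max; rewrite lt_iN.
exists (trim_graph (lower_edges d lt_aN)), (trim_graph (upper_edges d lt_aN)); split.
- exact: is_pop_lower.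
- exact: size_edges_lower.
- exact: elementary_pop_upper.
- exact: composable_lower_upper.
- exact: pop_iso_comp_split.
Qed.

Lemma decomp_chain_rcons acc gs g :
  decomp_chain acc gs -> elementary_pop g ->
  composable (foldl (fun acc g => pop_comp g acc) acc gs) g -> decomp_chain acc (rcons gs g).
Proof.
by elim: gs acc => [|h gs IH] acc //= [el [cp ch]] elg cpg; split; last split; last apply: IH.
Qed.

Unset Implicit Arguments.

Theorem proposition2p11 (G : pgraph) :
  is_pop G ->
  exists (G1 : pgraph) (gs : seq pgraph),
    elementary_pop G1 /\ decomp_chain G1 gs /\
    pop_iso (foldl (fun acc g => pop_comp g acc) G1 gs) G.
Proof.
have [n] : exists n, size (edges G) < n by exists (size (edges G)).+1.
elim: n G => // n IH G lt_Gn popG; case: (pickP (@internal G)) => [u int_u | no_int].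
- have [G' [E [popG' lt_G'G elE cpG'E isoE]]] := pop_peel popG int_u.
  have [G1 [gs [el1 [ch iso]]]] := IH G' (leq_trans lt_G'G lt_Gn) popG'.
  have [f femb] := emb_of_pop_iso iso.
  exists G1, (rcons gs E); split=> //; split; last by rewrite foldl_rcons; apply: isoE femb.
  by apply: decomp_chain_rcons; rewrite // /composable -(count_output_emb femb).
- exists G, [::]; split; first by split=> // x y; rewrite no_int.
  by split=> //; apply: (pop_iso_emb (pgraph_emb_id G)) => y; exists y.
Qed.
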